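(* For integers $n\geq 3$ and $m\geq 1$, $$\chi_\rho(FSSD_m(S'(C_n))) = \begin{cases} 3, & n \text{ even},\\ 5, & n\text{ odd}.\end{cases}$$
   Context: All graphs are finite and simple. For a positive integer $i$, an $i$-packing in a graph is a set of vertices any two distinct members of which are at distance greater than $i$. The packing chromatic number $\chi_\rho(H)$ is the smallest $k$ such that $V(H)$ can be partitioned into sets $V_1,\dots,V_k$ with each $V_i$ an $i$-packing. For a positive integer $m$, $FSSD_m(G)$ is obtained from $G$ by replacing each edge $xy$ by a copy of $K_{2,m}$: the edge $xy$ is deleted and $m$ new vertices are added, each adjacent to exactly $x$ and $y$. The splitting graph $S'(G)$ of a graph $G$ with vertices $w_1,\dots,w_n$ is obtained from $G$ by adding new vertices $w_1',\dots,w_n'$, where each $w_i'$ is joined to every neighbor of $w_i$ in $G$ (equivalently, the neighborhood corona $G\star K_1$). $C_n$ is the cycle on $n$ vertices. *)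

From mathcomp Require Import all_boot.
Set Implicit Arguments. Unset Strict Implicit. Unset Printing Implicit Defensive.

Record graph := Graph { vert : finType; adj : rel vert }.

Fixpoint dist_le (G : graph) (k : nat) (x y : vert G) : bool :=
  match k with
  | 0 => x == y
  | k'.+1 => @dist_le G k' x y || [exists z, @adj G x z && @dist_le G k' z y]
  end.

Definition packing (G : graph) (i : nat) (A : {set vert G}) : Prop :=
  forall x y, x \in A -> y \in A -> x != y -> ~~ @dist_le G i x y.

(* V(G) can be partitioned into V_1,...,V_k with V_i an i-packing.
   Classes are indexed 0..k-1, class c corresponding to V_(c+1). *)
Definition packing_colorable (G : graph) (k : nat) : Prop :=
  exists V : 'I_k -> {set vert G},
    (forall x : vert G, exists! c : 'I_k, x \in V c) /\
    (forall c : 'I_k, @packing G c.+1 (V c)).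

Definition packing_chromatic_number_is (G : graph) (k : nat) : Prop :=
  @packing_colorable G k /\ forall j, @packing_colorable G j -> k <= j.

(* The cycle C_n on vertices 0..n-1 (simple for n >= 3). *)
Definition cycle_graph (n : nat) : graph :=
  @Graph 'I_n (fun i j : 'I_n =>
    (val j == (val i).+1 %% n) || (val i == (val j).+1 %% n)).

(* Splitting graph S'(G): inl w = original w, inr w = the new vertex w';
   w' is joined to every neighbour of w in G. *)
Definition splitting_adj (G : graph) (u v : vert G + vert G) : bool :=
  match u, v with
  | inl x, inl y => @adj G x y
  | inl x, inr y => @adj G y x
  | inr x, inl y => @adj G x y
  | inr _, inr _ => false
  end.

Definition splitting_graph (G : graph) : graph :=
  @Graph (vert G + vert G)%type (@splitting_adj G).

(* FSSD_m(G): each edge xy (an unordered pair {x,y}) is replaced by m new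
   vertices (the pair {x,y} together with an index in 'I_m), each adjacent
   exactly to x and y; the edge xy itself is deleted. *)
Definition fssd_valid (G : graph) (m : nat)
    (u : vert G + ({set vert G} * 'I_m)) : bool :=
  match u with
  | inl _ => true
  | inr (s, _) => [exists x, exists y, @adj G x y && (s == [set x; y])]
  end.

Definition fssd_vert (G : graph) (m : nat) : finType :=
  {u : (vert G + ({set vert G} * 'I_m))%type | @fssd_valid G m u}.

Definition fssd_adj0 (G : graph) (m : nat)
    (u v : vert G + ({set vert G} * 'I_m)) : bool :=
  match u, v with
  | inl x, inr (s, _) => x \in s
  | inr (s, _), inl x => x \in s
  | _, _ => false
  end.

Definition FSSD (m : nat) (G : graph) : graph :=
  @Graph (fssd_vert G m) (fun u v => @fssd_adj0 G m (val u) (val v)).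

From mathcomp Require Import all_boot.
From mathcomp Require Import zify.
Set Implicit Arguments. Unset Strict Implicit. Unset Printing Implicit Defensive.

(* FSSD_m(S'(C_n)) is bipartite between the 2n original vertices and the
   subdivision vertices, and two original vertices are at distance 2 when
   adjacent in S'(C_n) and at distance >= 4 otherwise.  Upper bound: colour
   the subdivision vertices 1 and w_i, w_i' by 2 or 3 according to the parity
   of i; for odd n the pair w_(n-1), w_(n-1)' breaks the parity and gets 4, 5.
   Lower bound with colours <= 4: an original vertex w_c of colour 1 would have
   four neighbours pairwise at distance 2, so every w_c has colour 2, 3 or 4,
   consecutive ones differ, and a w_c of colour 4 forces equal colours on its
   two cycle neighbours (otherwise w_c' or a neighbour of it is uncolourable).
   Replacing each 4 by the colour in {2,3} missing around it gives a proper
   2-colouring of C_n, so n is even; and for even n two consecutive w_c already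
   need colours 2 and 3. *)

Section Distance.
Variable G : graph.
Implicit Types x y : vert G.

Lemma dist_le_refl k x : dist_le k x x.
Proof. by elim: k => [|k IHk] /=; rewrite ?eqxx ?IHk. Qed.

Lemma dist_le_path k x p :
  path (@adj G) x p -> size p <= k -> dist_le k x (last x p).
Proof.
elim: p x k => [|z p IHp] x k /=; first by rewrite dist_le_refl.
case: k => [|k] // /andP[xz zp] ltpk /=.
by apply/orP; right; apply/existsP; exists z; rewrite xz IHp.
Qed.

Lemma dist_le_walk k x y :
  dist_le k x y -> exists2 p, path (@adj G) x p & last x p = y /\ size p <= k.
Proof.
elim: k x => [|k IHk] x /=; first by move/eqP <-; exists [::].
case/orP=> [/IHk[p xp [py ltpk]] | /existsP[z /andP[xz /IHk[p zp [py ltpk]]]]].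
  by exists p => //; split => //; apply: leqW.
by exists (z :: p); rewrite /= ?xz.
Qed.

Lemma dist_le_mono k k' x y : k <= k' -> dist_le k x y -> dist_le k' x y.
Proof. by move=> lekk' /dist_le_walk[p xp [<- lepk]]; rewrite dist_le_path ?(leq_trans lepk). Qed.

End Distance.

Definition packing_coloring (G : graph) (k : nat) (col : vert G -> nat) : Prop :=
  (forall x, 0 < col x <= k) /\
  (forall x y, x != y -> col x = col y -> ~~ dist_le (col x) x y).

Lemma packing_colorableP (G : graph) (k : nat) :
  packing_colorable G k <-> exists col : vert G -> nat, packing_coloring k col.
Proof.
split=> [[V [Vpart Vpack]] | [col [col_range col_pack]]].
  have /fin_all_exists[f Vf] : forall x, exists c : 'I_k, x \in V c.
    by move=> x; have [c [xc _]] := Vpart x; exists c.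
  exists (fun x => (f x).+1); split=> [x | x y xy [/val_inj fxy]]; first by rewrite /= ltn_ord.
  by apply: (Vpack (f x)) => //; rewrite fxy.
have col_lt x : (col x).-1 < k by have := col_range x; lia.
exists (fun c : 'I_k => [set x | (col x).-1 == c]); split=> [x | c x y].
  exists (Ordinal (col_lt x)); split=> [|c]; rewrite inE //.
  by move=> /eqP cx; apply: val_inj.
rewrite !inE => /eqP cx /eqP cy xy.
have := col_range x; have := col_range y => /andP[ypos _] /andP[xpos _].
have eqxy : col x = col y by lia.
by rewrite -cx prednK //; apply: col_pack.
Qed.

Lemma packing_coloring_widen (G : graph) (k k' : nat) (col : vert G -> nat) :
  k <= k' -> packing_coloring k col -> packing_coloring k' col.
Proof.
move=> lekk' [col_range col_pack]; split=> // x.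
by have /andP[-> /leq_trans->] := col_range x.
Qed.

Lemma packing_coloring_path (G : graph) (k : nat) (col : vert G -> nat) x p :
  packing_coloring k col -> path (@adj G) x p -> size p <= col x ->
  x != last x p -> col x != col (last x p).
Proof.
move=> [_ col_pack] xp lepx xy; apply/eqP => /(col_pack _ _ xy).
by rewrite dist_le_path.
Qed.

Section Subdivision.
Variables (G : graph) (m : nat).
Local Notation F := (FSSD m G).
Implicit Types (x y z : vert G) (u v : vert F).

Definition fssd_orig x : vert F := exist (@fssd_valid G m) (inl x) isT.

Lemma fssd_sub_valid x y (k : 'I_m) : adj x y -> fssd_valid (inr ([set x; y], k)).
Proof. by move=> xy; apply/existsP; exists x; apply/existsP; exists y; rewrite xy eqxx. Qed.

Definition fssd_sub x y (xy : adj x y) (k : 'I_m) : vert F :=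
  exist (@fssd_valid G m) (inr ([set x; y], k)) (fssd_sub_valid k xy).

Lemma fssd_adj_orig_sub z x y (xy : adj x y) k :
  adj (fssd_orig z) (fssd_sub xy k) = (z \in [set x; y]).
Proof. by []. Qed.

Lemma fssd_adj_sub_orig z x y (xy : adj x y) k :
  adj (fssd_sub xy k) (fssd_orig z) = (z \in [set x; y]).
Proof. by []. Qed.

Lemma fssd_orig_eq_sub z x y (xy : adj x y) k : (fssd_orig z == fssd_sub xy k) = false.
Proof. by []. Qed.

Lemma fssd_orig_inj : injective fssd_orig.
Proof. by move=> x y /(congr1 val) [->]. Qed.

Lemma fssd_adj_sym u v : adj u v = adj v u.
Proof. by case: u => [[x|[s k]] ?]; case: v => [[y|[t l]] ?]. Qed.

Lemma fssd_sub_neq z x y x' y' (xy : adj x y) (xy' : adj x' y') k k' :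
  z \in [set x; y] -> z \notin [set x'; y'] -> fssd_sub xy k != fssd_sub xy' k'.
Proof. by move=> zxy zxy'; apply/eqP => /(congr1 val) [exy _]; rewrite -exy zxy in zxy'. Qed.

Definition fssd_is_orig u : bool := if val u is inl _ then true else false.

Lemma fssd_is_origP u : fssd_is_orig u -> exists x, u = fssd_orig x.
Proof. by case: u => [[x|//] ux] _; exists x; apply: val_inj. Qed.

Lemma fssd_adj_is_orig u v : adj u v -> fssd_is_orig u != fssd_is_orig v.
Proof. by case: u => [[x|[s k]] ?]; case: v => [[y|[t l]] ?]. Qed.

Lemma fssd_adj_neq u v : adj u v -> u != v.
Proof. by move/fssd_adj_is_orig; apply: contraNneq => ->. Qed.

Lemma fssd_path_is_orig u p :
  path (@adj F) u p -> fssd_is_orig (last u p) = fssd_is_orig u (+) odd (size p).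
Proof.
elim: p u => [|v p IHp] u /=; first by rewrite addbF.
case/andP=> /fssd_adj_is_orig uv /IHp->.
by case: (fssd_is_orig u) (fssd_is_orig v) uv => [] [] //; case: odd.
Qed.

Lemma fssd_orig_dist_le3 x y :
  dist_le 3 (fssd_orig x) (fssd_orig y) -> [|| x == y, adj x y | adj y x].
Proof.
case/dist_le_walk=> p xp [py lep3].
have := fssd_path_is_orig xp; rewrite py /= => /esym/addbP odd_p.
case: p xp py lep3 odd_p => [|u [|v [|w [|? ?]]]] //=.
  by move=> _ /fssd_orig_inj->; rewrite eqxx.
case/and3P=> xu uv _ ey _ _; subst v.
case: u xu uv => [[//|[s k]] /existsP[a /existsP[b /andP[ab /eqP es]]]] /=.
by rewrite es !inE => /orP[] /eqP-> /orP[] /eqP->; rewrite ?eqxx ?ab ?orbT.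
Qed.

Lemma fssd_dist_le1 u v :
  fssd_is_orig u = fssd_is_orig v -> dist_le 1 u v -> u = v.
Proof.
move=> uv /dist_le_walk[p up [pv lep1]].
have := fssd_path_is_orig up; rewrite pv uv.
by case: p up pv lep1 => [|? [|? ?]] //= _ _ _; rewrite addbT; case: fssd_is_orig.
Qed.

End Subdivision.

Section Cycle.
Variable n : nat.
Local Notation C := (cycle_graph n).
Implicit Types i j : 'I_n.

Lemma cycle_adjE i j : adj (g:=C) i j = (j == ordS i) || (i == ordS j).
Proof. by []. Qed.

Lemma cycle_adj_sym i j : adj (g:=C) i j = adj (g:=C) j i.
Proof. by rewrite !cycle_adjE orbC. Qed.

Lemma cycle_adj_ordS i : adj (g:=C) i (ordS i).
Proof. by rewrite cycle_adjE eqxx. Qed.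

Lemma cycle_adj_ordS_sym i : adj (g:=C) (ordS i) i.
Proof. by rewrite cycle_adjE eqxx orbT. Qed.

Lemma val_ordS i : (ordS i : nat) = if i.+1 == n then 0 else i.+1.
Proof.
rewrite /=; case: eqP => [->|ne]; first by rewrite modnn.
by rewrite modn_small //; have := ltn_ord i; lia.
Qed.

Lemma ordS_neq (n_gt1 : 1 < n) i : ordS i != i.
Proof. by apply/eqP => /(congr1 (@nat_of_ord n)); rewrite val_ordS; case: eqP => /=; lia. Qed.

Lemma ordS2_neq (n_gt2 : 2 < n) i : ordS (ordS i) != i.
Proof.
apply/eqP => /(congr1 (@nat_of_ord n)); rewrite !val_ordS.
have := ltn_ord i; case: (eqVneq i.+1 n) => [iSn|_] /=;
  by case: ifP => /eqP; lia.
Qed.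

Lemma cycle_adj_odd i j :
  adj (g:=C) i j -> odd i = odd j -> odd n && ((i == n.-1 :> nat) || (j == n.-1 :> nat)).
Proof.
wlog ->: i j / j = ordS i.
  move=> IH ij oij; move: (ij); rewrite cycle_adjE => /orP[] /eqP e.
    exact: IH e ij oij.
  by rewrite orbC; apply: IH (e) _ _ => //; rewrite e cycle_adj_ordS.
move=> _; rewrite val_ordS; case: (eqVneq i.+1 n) => [iSn | _] /=; last by case: odd.
move=> oi; have -> : odd n by rewrite -iSn /= oi.
by have -> : i == n.-1 :> nat by apply/eqP; lia.
Qed.

Lemma iter_ordS k i : (iter k (@ordS n) i : nat) = (i + k) %% n.
Proof.
elim: k => [|k IHk]; first by rewrite addn0 modn_small.
by rewrite iterS /= IHk addnS -addn1 modnDml addn1.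
Qed.

Lemma cycle_alternating_even (f : 'I_n -> bool) :
  (forall i, f (ordS i) = ~~ f i) -> ~~ odd n.
Proof.
move=> fS; case: (posnP n) => [-> // | n_gt0]; pose i0 := Ordinal n_gt0.
have f_iter k : f (iter k (@ordS n) i0) = f i0 (+) odd k.
  by elim: k => [|k IHk]; rewrite ?addbF // iterS fS IHk /= addbN.
have /val_inj iter_n : iter n (@ordS n) i0 = i0 :> nat by rewrite iter_ordS modnDr modn_small.
by apply/negP => odd_n; move: (f_iter n); rewrite iter_n odd_n addbT; case: (f _).
Qed.
End Cycle.

Definition split_base (G : graph) (a : vert G + vert G) : vert G :=
  match a with inl x | inr x => x end.

Lemma splitting_adj_base (G : graph) (a b : vert (splitting_graph G)) :
  adj a b -> adj (split_base a) (split_base b) || adj (split_base b) (split_base a).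
Proof. by case: a => x; case: b => y //= ->; rewrite ?orbT. Qed.

Section UpperBound.
Variables (n m : nat).
Local Notation C := (cycle_graph n).
Local Notation S := (splitting_graph C).
Local Notation F := (FSSD m S).

Definition split_cycle_col (a : vert S) : nat :=
  if odd n && (split_base a == n.-1 :> nat) then (if a is inl _ then 4 else 5)
  else (odd (split_base a)).+2.

Definition fssd_split_cycle_col (u : vert F) : nat :=
  if val u is inl a then split_cycle_col a else 1.

Lemma split_cycle_col_eq_far (a b : vert S) :
  a != b -> split_cycle_col a = split_cycle_col b ->
  split_cycle_col a <= 3 /\ ~~ adj (split_base a) (split_base b).
Proof.
rewrite /split_cycle_col.
case: ifP => [/andP[odd_n an] | a_reg]; case: ifP => [/andP[_ bn] | b_reg].
- have /val_inj eab : split_base a = split_base b :> nat by rewrite (eqP an) (eqP bn).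
  by clear an bn; case: a b eab => a [] b //= ->; rewrite eqxx.
- by case: (a) => ? _; case: odd.
- by case: (b) => ? _; case: odd.
move=> _ [/(congr1 odd)]; rewrite !oddb => odd_ab; split; first by case: odd.
apply/negP => /cycle_adj_odd /(_ odd_ab) /andP[odd_n /orP[] base_n].
  by rewrite odd_n base_n in a_reg.
by rewrite odd_n base_n in b_reg.
Qed.

Lemma split_cycle_col_gt1 a : 1 < split_cycle_col a.
Proof. by rewrite /split_cycle_col; case: ifP; case: a. Qed.

Lemma fssd_split_cycle_col_eq1 u :
  (fssd_split_cycle_col u == 1) = ~~ fssd_is_orig u.
Proof.
rewrite /fssd_split_cycle_col /fssd_is_orig.
by case: (val u) => [a|_] //; rewrite gtn_eqF ?split_cycle_col_gt1.
Qed.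

Lemma fssd_split_cycle_packing :
  packing_coloring (if odd n then 5 else 3) fssd_split_cycle_col.
Proof.
split=> [[[a|?] ?] | u v uv col_uv].
- rewrite /fssd_split_cycle_col /= (ltnW (split_cycle_col_gt1 a)) /= /split_cycle_col.
  by case: ifP => [/andP[-> _] | _]; [case: (a) | case: odd; case: (odd n)].
- by rewrite /fssd_split_cycle_col /=; case: (odd n).
have same_side : fssd_is_orig u = fssd_is_orig v.
  by apply: negb_inj; rewrite -!fssd_split_cycle_col_eq1 col_uv.
case uO: (fssd_is_orig u); last first.
  have /eqP-> : fssd_split_cycle_col u == 1 by rewrite fssd_split_cycle_col_eq1 uO.
  by apply/negP => /(fssd_dist_le1 same_side) eq_uv; rewrite eq_uv eqxx in uv.
have [a eu] := fssd_is_origP uO; have [b ev] := fssd_is_origP (etrans (esym same_side) uO).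
subst u v; rewrite (inj_eq (@fssd_orig_inj _ _)) in uv col_uv *.
have [col_le3 not_adj] := split_cycle_col_eq_far uv col_uv.
apply/negP => /(dist_le_mono col_le3) /fssd_orig_dist_le3.
rewrite (negPf uv) /= => /orP[] /splitting_adj_base.
  by rewrite [X in _ || X]cycle_adj_sym orbb (negPf not_adj).
by rewrite [X in X || _]cycle_adj_sym orbb (negPf not_adj).
Qed.
End UpperBound.

(* Reads the colour a of w_i, followed by the colour b of w_(i+1), as a colour
   in {2,3}: a colour 4 becomes the one of {2,3} that its neighbours lack. *)
Definition two_colour (a b : nat) : bool := if a == 4 then b == 3 else a == 2.

Lemma two_colour_flip a b d :
  1 < a <= 4 -> 1 < b <= 4 -> 1 < d <= 4 -> a != b -> b != d ->
  (b == 4) ==> (a == d) -> two_colour b d = ~~ two_colour a b.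
Proof.
by case: a b d => [|[|[|[|[|[|?]]]]]] [|[|[|[|[|[|?]]]]]] [|[|[|[|[|[|?]]]]]].
Qed.

Section LowerBound.
Variables (n m : nat) (n_gt2 : 2 < n) (k0 : 'I_m).
Local Notation C := (cycle_graph n).
Local Notation S := (splitting_graph C).
Local Notation F := (FSSD m S).
Variable col : vert F -> nat.
Hypothesis col_pack : packing_coloring 4 col.

(* w i and w' i are the vertices w_i and w_i' of S'(C_n); e_ww i, e_w'w i and
   e_ww' i are the k0-th subdivision vertices of the edges w_i w_(i+1),
   w_i' w_(i+1) and w_i w_(i+1)'.  The summand types of inl' and inr' are
   fixed so that all these terms are syntactically equal, as lia requires. *)
Local Notation inl' := (@inl (vert C) (vert C)).
Local Notation inr' := (@inr (vert C) (vert C)).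
Local Notation w i := (@fssd_orig S m (inl' i)).
Local Notation w' i := (@fssd_orig S m (inr' i)).
Local Notation e_ww i := (@fssd_sub S m (inl' i) (inl' (ordS i)) (cycle_adj_ordS i) k0).
Local Notation e_w'w i := (@fssd_sub S m (inr' i) (inl' (ordS i)) (cycle_adj_ordS i) k0).
Local Notation e_ww' i := (@fssd_sub S m (inl' i) (inr' (ordS i)) (cycle_adj_ordS_sym i) k0).

Lemma ordS_eqE (i : 'I_n) :
  ((ordS i == i) = false) * ((i == ordS i) = false) *
  ((ordS (ordS i) == i) = false) * ((i == ordS (ordS i)) = false).
Proof.
have n_gt1 : 1 < n by apply: ltnW.
by rewrite ![i == _]eq_sym (negPf (ordS_neq n_gt1 i)) (negPf (ordS2_neq n_gt2 i)).
Qed.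

Local Ltac fssd_simpl :=
  cbn [path last size];
  rewrite ?fssd_adj_orig_sub ?fssd_adj_sub_orig ?fssd_orig_eq_sub
          ?(inj_eq (@fssd_orig_inj _ _)) ?inE ?(inj_eq inl_inj) ?(inj_eq inr_inj)
          ?ordS_eqE ?eqxx.

Lemma col_range u : 0 < col u <= 4.
Proof. by case: col_pack. Qed.

Lemma col_walk_neq x p :
  path (@adj F) x p -> size p <= col x -> x != last x p -> col x != col (last x p).
Proof. exact: packing_coloring_path col_pack. Qed.

Lemma col_nbr_neq x N N' :
  col x = 1 -> adj x N -> adj x N' -> N != N' -> 1 < col N /\ col N != col N'.
Proof.
move=> col1 xN xN' NN'.
have col_N : col x != col N.
  apply: (col_walk_neq (p := [:: N])); cbn [path last size].
  - by rewrite xN.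
  - by rewrite col1.
  - exact: fssd_adj_neq xN.
have col_N_gt1 : 1 < col N by have := col_range N; lia.
split=> //; apply: (col_walk_neq (p := [:: x; N'])); cbn [path last size] => //.
by rewrite fssd_adj_sym xN xN'.
Qed.

Lemma col_w_gt1 c : 1 < col (w c).
Proof.
have [i <-{c}] : exists i, ordS i = c by exists (ord_pred c); rewrite ord_predK.
rewrite ltnNge; apply/negP => col_le1.
have col1 : col (w (ordS i)) = 1 by have := col_range (w (ordS i)); lia.
have nbr := col_nbr_neq col1.
have [g1 n12] : 1 < col (e_ww i) /\ col (e_ww i) != col (e_w'w i).
  by apply: nbr; last apply: (@fssd_sub_neq S m (inl' i)); fssd_simpl.
have [_ n13] : 1 < col (e_ww i) /\ col (e_ww i) != col (e_ww (ordS i)).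
  by apply: nbr; last apply: (@fssd_sub_neq S m (inl' i)); fssd_simpl.
have [_ n14] : 1 < col (e_ww i) /\ col (e_ww i) != col (e_ww' (ordS i)).
  by apply: nbr; last apply: (@fssd_sub_neq S m (inl' i)); fssd_simpl.
have [g2 n23] : 1 < col (e_w'w i) /\ col (e_w'w i) != col (e_ww (ordS i)).
  by apply: nbr; last apply: (@fssd_sub_neq S m (inr' i)); fssd_simpl.
have [_ n24] : 1 < col (e_w'w i) /\ col (e_w'w i) != col (e_ww' (ordS i)).
  by apply: nbr; last apply: (@fssd_sub_neq S m (inr' i)); fssd_simpl.
have [g3 n34] : 1 < col (e_ww (ordS i)) /\ col (e_ww (ordS i)) != col (e_ww' (ordS i)).
  by apply: nbr; last apply: (@fssd_sub_neq S m (inl' (ordS (ordS i)))); fssd_simpl.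
have [g4 _] : 1 < col (e_ww' (ordS i)) /\ col (e_ww' (ordS i)) != col (e_ww i).
  by apply: nbr; last apply: (@fssd_sub_neq S m (inr' (ordS (ordS i)))); fssd_simpl.
move: (col_range (e_ww i)) (col_range (e_w'w i)).
move: (col_range (e_ww (ordS i))) (col_range (e_ww' (ordS i))).
lia.
Qed.

Lemma col_w_ordS_neq i : col (w i) != col (w (ordS i)).
Proof.
apply: (col_walk_neq (p := [:: e_ww i; w (ordS i)])); fssd_simpl => //.
exact: col_w_gt1.
Qed.

(* Otherwise {col w_i, col w_(i+2)} = {2,3}; then w_(i+1)' is forced to
   colour 1 and the subdivision vertex joining it to the colour-2 one of
   w_i, w_(i+2) sees all four colours within the required distances. *)
Lemma col_w_flank i :
  col (w (ordS i)) = 4 -> col (w i) = col (w (ordS (ordS i))).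
Proof.
set c := ordS i; set c' := ordS c => col_c.
have gt1_i := col_w_gt1 i; have gt1_c' := col_w_gt1 c'.
have ne_ic : col (w i) != col (w c) := col_w_ordS_neq i.
have ne_cc' : col (w c) != col (w c') := col_w_ordS_neq c.
have r_i := col_range (w i); have r_c' := col_range (w c').
apply/eqP; apply: contraT => ne_ic'.
have col_w'c : col (w' c) = 1.
  have n1 : col (w i) != col (w' c).
    by apply: (col_walk_neq (p := [:: e_ww' i; w' c])); fssd_simpl.
  have n2 : col (w c') != col (w' c).
    by apply: (col_walk_neq (p := [:: e_w'w c; w' c])); fssd_simpl.
  have n3 : col (w c) != col (w' c).
    apply: (col_walk_neq (p := [:: e_ww c; w c'; e_w'w c; w' c])); fssd_simpl => //.
    by rewrite col_c.
  have := col_range (w' c); lia.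
have [col_i | col_i] : col (w i) = 2 \/ col (w i) = 3 by lia.
- pose P := e_ww' i.
  have n1 : col (w' c) != col P.
    by apply: (col_walk_neq (p := [:: P])); fssd_simpl; rewrite ?col_w'c.
  have n2 : col (w i) != col P.
    by apply: (col_walk_neq (p := [:: P])); fssd_simpl; rewrite ?col_i.
  have n3 : col (w c') != col P.
    apply: (col_walk_neq (p := [:: e_w'w c; w' c; P])); fssd_simpl => //; lia.
  have n4 : col (w c) != col P.
    by apply: (col_walk_neq (p := [:: e_ww i; w i; P])); fssd_simpl; rewrite ?col_c.
  have := col_range P; lia.
pose Q := e_w'w c.
have n1 : col (w' c) != col Q.
  by apply: (col_walk_neq (p := [:: Q])); fssd_simpl; rewrite ?col_w'c.
have n2 : col (w c') != col Q.
  by apply: (col_walk_neq (p := [:: Q])); fssd_simpl; lia.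
have n3 : col (w i) != col Q.
  by apply: (col_walk_neq (p := [:: e_ww' i; w' c; Q])); fssd_simpl; rewrite ?col_i.
have n4 : col (w c) != col Q.
  by apply: (col_walk_neq (p := [:: e_ww c; w c'; Q])); fssd_simpl; rewrite ?col_c.
have := col_range Q; lia.
Qed.

Lemma two_colour_w_ordS i :
  two_colour (col (w (ordS i))) (col (w (ordS (ordS i)))) =
  ~~ two_colour (col (w i)) (col (w (ordS i))).
Proof.
apply: two_colour_flip; rewrite ?col_w_gt1 ?col_w_ordS_neq ?(andP (col_range _)).2 //.
by apply/implyP => /eqP/col_w_flank->.
Qed.

Lemma packing_coloring4_even : ~~ odd n.
Proof.
apply: (cycle_alternating_even (f := fun i => two_colour (col (w i)) (col (w (ordS i))))).
exact: two_colour_w_ordS.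
Qed.

Lemma packing_coloring4_col_gt2 : exists u, 2 < col u.
Proof.
have n_gt0 : 0 < n by apply: leq_trans n_gt2.
pose i0 := Ordinal n_gt0.
have := col_w_gt1 i0; have := col_w_gt1 (ordS i0); have := col_w_ordS_neq i0.
case: (ltnP 2 (col (w i0))) => [|le2]; first by exists (w i0).
by exists (w (ordS i0)); lia.
Qed.
End LowerBound.

Theorem proposition8 (n m : nat) (hn : 3 <= n) (hm : 1 <= m) :
  packing_chromatic_number_is (FSSD m (splitting_graph (cycle_graph n)))
    (if odd n then 5 else 3).
Proof.
split.
  apply/packing_colorableP; exists (@fssd_split_cycle_col n m).
  exact: fssd_split_cycle_packing.
move=> j /packing_colorableP[col col_j]; rewrite leqNgt; apply/negP => j_lt.
have col4 : packing_coloring 4 col.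
  by apply: packing_coloring_widen col_j; move: j_lt; case: odd; lia.
pose k0 : 'I_m := Ordinal hm.
case: ifP j_lt => [odd_n _ | _ j_lt2].
  by move: (packing_coloring4_even hn k0 col4); rewrite odd_n.
have [u col_u] := packing_coloring4_col_gt2 hn k0 col4.
by case: col_j => /(_ u) /andP[_ col_le_j] _; lia.
Qed.
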